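(* Let $f$ be a measurable map preserving a probability measure $\mu$, and fix $\tau>0$. Let $(U_n)$, $(V_n)$ be nested sequences of measurable sets with $V_n\subset U_n$, $\mu(V_n)>0$, $\mu(U_n)\to0$, and $\mu(U_n\setminus V_n)/\mu(U_n)\to0$ as $n\to\infty$. Then for every $k\in\mathbb{N}_0$, $$\big|\mu(\zeta_{U_n}=k)-\mu(\zeta_{V_n}=k)\big|\to0\quad\text{as }n\to\infty.$$
   Context: For a set $W$ of positive measure, $\zeta_W=\sum_{0\le j<\tau/\mu(W)}\mathbb{I}_W\circ f^j$. *)

From HB Require Import structures.
From mathcomp Require Import all_boot all_order all_algebra.
From mathcomp Require Import all_classical all_reals all_analysis.
Set Implicit Arguments. Unset Strict Implicit. Unset Printing Implicit Defensive.
Import Order.TTheory GRing.Theory Num.Theory.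
Local Open Scope classical_set_scope.
Local Open Scope ring_scope.

(* Number of naturals j with 0 <= j < x, for x > 0: equals ceil x
   (an integer j satisfies j < x iff j < ceil x). *)
Definition nb_below (R : realType) (x : R) : nat := `|Num.ceil x|%N.

Definition zeta (d : measure_display) (T : measurableType d) (R : realType)
  (mu : {measure set T -> \bar R}) (f : T -> T) (tau : R) (W : set T) (x : T) : R :=
  \sum_(j < nb_below (tau / fine (mu W))) (\1_W (iter j f x) : R).

From HB Require Import structures.
From mathcomp Require Import all_boot all_order all_algebra.
From mathcomp Require Import all_classical all_reals all_analysis.
From mathcomp Require Import measurable_realfun lra.
Import Order.TTheory GRing.Theory Num.Theory.
Local Open Scope classical_set_scope.
Local Open Scope ring_scope.
Set Implicit Arguments. Unset Strict Implicit.

(* Let N_W = #{j : j < tau/mu(W)}.  Outside the set E of points x with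
   f^j x in U \ V for some j < N_U, or f^j x in V for some N_U <= j < N_V,
   the orbit visits U and V at the same times before N_U and avoids V between
   N_U and N_V, so zeta_U x = zeta_V x.  Hence the two level sets differ by at
   most mu(E), and by invariance of mu
     mu(E) <= N_U mu(U \ V) + (N_V - N_U) mu(V)
           <= 2 tau mu(U \ V) / mu(U) + mu(U),
   which tends to 0. *)

Lemma nb_below_ge (R : realType) (x : R) : 0 <= x -> x <= (nb_below x)%:R.
Proof.
move=> x0; rewrite /nb_below natr_absz ger0_norm ?ceil_ge0 ?ceil_ge //.
by rewrite (lt_le_trans _ x0) // ltrN10.
Qed.

Lemma nb_below_lt (R : realType) (x : R) : 0 <= x -> (nb_below x)%:R < x + 1.
Proof.
move=> x0; rewrite /nb_below natr_absz ger0_norm; last first.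
  by rewrite ceil_ge0 (lt_le_trans _ x0) // ltrN10.
by have /andP[+ _] := ceil_itv x; rewrite intrD -ltrBlDr.
Qed.

Lemma le_nb_below (R : realType) (x y : R) :
  0 <= x -> x <= y -> (nb_below x <= nb_below y)%N.
Proof.
move=> x0 xy; have y0 := le_trans x0 xy.
rewrite /nb_below -(ler_nat R) !natr_absz !ger0_norm ?ler_int ?le_ceil //.
  by rewrite ceil_ge0 (lt_le_trans _ y0) // ltrN10.
by rewrite ceil_ge0 (lt_le_trans _ x0) // ltrN10.
Qed.

Lemma fine_measure_dist_le (d : measure_display) (T : measurableType d)
    (R : realType) (mu : {finite_measure set T -> \bar R}) (A B E : set T) :
  measurable A -> measurable B -> measurable E ->
  A `\` E `<=` B -> B `\` E `<=` A ->
  `|fine (mu A) - fine (mu B)| <= fine (mu E).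
Proof.
move=> mA mB mE AB BA.
have le_addE X Y : measurable X -> measurable Y -> X `\` E `<=` Y ->
    fine (mu X) <= fine (mu Y) + fine (mu E).
  move=> mX mY XY; rewrite -lee_fin EFinD !fineK ?fin_num_measure //.
  apply: le_trans (measureU2 mu mY mE).
  apply: le_measure; rewrite ?inE //; first exact: measurableU.
  by move=> x Xx; have [Ex|nEx] := pselect (E x); [right|left; exact: XY].
have := le_addE _ _ mA mB AB; have := le_addE _ _ mB mA BA.
by rewrite ler_norml; lra.
Qed.

Lemma discrepancy_weight_le (R : realType) (tau a b c : R) (m n : nat) :
  0 < tau -> 0 < b -> 0 <= c -> a = b + c ->
  tau / a <= m%:R -> m%:R < tau / a + 1 -> n%:R < tau / b + 1 ->
  m%:R * c + (n%:R - m%:R) * b <= 2 * tau * (c / a) + a.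
Proof.
move=> tau0 b0 c0 abc am ma nb.
have a0 : 0 < a by lra.
have tau_b : tau / b * b = tau by rewrite mulfVK ?gt_eqF.
have tau_ab : tau / a * b = tau - tau / a * c.
  by rewrite (_ : b = a - c) ?mulrBr ?mulfVK ?gt_eqF //; lra.
have : m%:R * c <= (tau / a + 1) * c by apply: ler_wpM2r => //; exact: ltW.
have : (n%:R - m%:R) * b <= (tau / b + 1 - tau / a) * b.
  by apply: ler_wpM2r; [exact: ltW|lra].
lra.
Qed.

Section iterates.
Variables (d : measure_display) (T : measurableType d) (R : realType).
Variable f : T -> T.
Hypothesis mf : measurable_fun setT f.

Lemma measurable_fun_iter j : measurable_fun setT (iter j f).
Proof.
elim: j => [|j IH] /=; first exact: measurable_id.
exact: measurableT_comp mf IH.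
Qed.

Lemma measurable_preimage_iter j A :
  measurable A -> measurable (iter j f @^-1` A).
Proof. by move=> mA; rewrite -[_ @^-1` _]setTI; exact: measurable_fun_iter. Qed.

Variable mu : {finite_measure set T -> \bar R}.
Hypothesis mu_invariant : forall A, measurable A -> mu (f @^-1` A) = mu A.

Lemma measure_preimage_iter j A :
  measurable A -> mu (iter j f @^-1` A) = mu A.
Proof.
elim: j A => [|j IH] A mA //=.
rewrite -[X in mu X]/(iter j f @^-1` (f @^-1` A)) IH ?mu_invariant //.
by rewrite -[_ @^-1` _]setTI; exact: mf.
Qed.

Lemma measurable_zeta_level tau W r :
  measurable W -> measurable [set x | zeta mu f tau W x = r].
Proof.
move=> mW; rewrite -[X in measurable X]setTI.
apply: (measurable_sum _ _ measurableT (measurable_set1 r)) => j.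
exact: measurableT_comp (measurable_indic (D:=setT) (R:=R) mW) (measurable_fun_iter j).
Qed.

Definition discrepancy_set (U V : set T) (m n : nat) : set T :=
  \bigcup_(j in `I_n) iter j f @^-1` (if (j < m)%N then U `\` V else V).

Lemma measurable_discrepancy_set U V m n :
  measurable U -> measurable V -> measurable (discrepancy_set U V m n).
Proof.
move=> mU mV; apply: bigcup_measurable => j _.
by apply: measurable_preimage_iter; case: ifP => _; [exact: measurableD|].
Qed.

Lemma sum_indic_iter_eq U V m n x : V `<=` U -> (m <= n)%N ->
  ~ discrepancy_set U V m n x ->
  \sum_(j < m) (\1_U (iter j f x) : R) = \sum_(j < n) \1_V (iter j f x).
Proof.
move=> VU mn xE.
have notin j : (j < n)%N -> ~ (if (j < m)%N then U `\` V else V) (iter j f x).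
  by move=> jn hj; apply: xE; exists j.
rewrite -!(big_mkord xpredT (fun j => \1__ (iter j f x))) (big_cat_nat _ mn) //=.
rewrite [X in _ = _ + X]big_nat [X in _ = _ + X]big1 ?addr0 => [|j /andP[mj jn]]; last first.
  by have := notin j jn; rewrite ltnNge mj => nV; rewrite indicE memNset.
apply: eq_big_nat => j /andP[_ jm]; have := notin j (leq_trans jm mn).
rewrite jm !indicE => nUV; congr (nat_of_bool _)%:R.
by apply/idP/idP => /set_mem Wj; apply/mem_set; [apply: contrapT => /(conj Wj)|exact: VU].
Qed.

Lemma measure_discrepancy_set_le U V m n :
  measurable U -> measurable V -> (m <= n)%N ->
  fine (mu (discrepancy_set U V m n))
    <= m%:R * fine (mu (U `\` V)) + (n - m)%:R * fine (mu V).
Proof.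
move=> mU mV mn.
pose W j := if (j < m)%N then U `\` V else V.
have mW j : measurable (W j) by rewrite /W; case: ifP => _; [exact: measurableD|].
rewrite -lee_fin fineK ?fin_num_measure //; last exact: measurable_discrepancy_set.
pose G j := iter j f @^-1` W j.
have := @content_subadditive _ _ _ mu _ G n
  (fun j _ => measurable_preimage_iter j (mW j))
  (measurable_discrepancy_set m n mU mV).
rewrite -bigcup_mkord => /(_ (@subset_refl _ _)) /le_trans; apply.
rewrite (eq_bigr (fun j : 'I_n => (fine (mu (W j)))%:E)) => [|j _]; last first.
  by rewrite fineK ?fin_num_measure //; exact: measure_preimage_iter.
rewrite sumEFin lee_fin -(big_mkord xpredT (fun j => fine (mu (W j)))).
rewrite (big_cat_nat _ mn) //=.
rewrite (eq_big_nat _ _ (F2 := fun=> fine (mu (U `\` V)))) => [|j /andP[_ jm]]; last by rewrite /W jm.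
rewrite [X in _ + X](eq_big_nat _ _ (F2 := fun=> fine (mu V))) => [|j /andP[mj _]]; last first.
  by rewrite /W ltnNge mj.
by rewrite !sumr_const_nat subn0 !mulr_natl.
Qed.

Lemma zeta_level_dist_le tau U V r :
  0 < tau -> measurable U -> measurable V -> V `<=` U -> (0 < mu V)%E ->
  `| fine (mu [set x | zeta mu f tau U x = r])
     - fine (mu [set x | zeta mu f tau V x = r]) |
    <= 2 * tau * (fine (mu (U `\` V)) / fine (mu U)) + fine (mu U).
Proof.
move=> tau0 mU mV VU muV0.
have mUV : measurable (U `\` V) by exact: measurableD.
set a := fine (mu U); set b := fine (mu V); set c := fine (mu (U `\` V)).
have split_U : a = b + c.
  by rewrite -fineD ?fin_num_measure // -measureU ?setDUK ?setDIK.
have b0 : 0 < b by rewrite -lte_fin fineK ?fin_num_measure.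
have c0 : 0 <= c by rewrite fine_ge0.
have a0 : 0 < a by lra.
have tau_a0 : 0 <= tau / a by rewrite divr_ge0 ?ltW.
have tau_b0 : 0 <= tau / b by rewrite divr_ge0 ?ltW.
have tau_ab : tau / a <= tau / b by rewrite ler_pM2l // lef_pV2 ?posrE //; lra.
set m := nb_below (tau / a); set n := nb_below (tau / b).
have mn : (m <= n)%N by exact: le_nb_below.
apply: le_trans (fine_measure_dist_le (E := discrepancy_set U V m n) mu _ _ _ _ _) _.
- exact: measurable_zeta_level.
- exact: measurable_zeta_level.
- exact: measurable_discrepancy_set.
- by move=> x [/= <- xE]; symmetry; exact: sum_indic_iter_eq.
- by move=> x [/= <- xE]; exact: sum_indic_iter_eq.
apply: le_trans (measure_discrepancy_set_le mU mV mn) _.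
rewrite natrB //; apply: discrepancy_weight_le => //.
- exact: nb_below_ge.
- exact: nb_below_lt.
- exact: nb_below_lt.
Qed.

End iterates.

Theorem lemma5p6 (d : measure_display) (T : measurableType d) (R : realType)
  (mu : probability T R) (f : T -> T) (tau : R)
  (U V : nat -> set T) :
  measurable_fun setT f ->
  (forall A, measurable A -> mu (f @^-1` A) = mu A) ->
  0 < tau ->
  (forall n, measurable (U n)) -> (forall n, measurable (V n)) ->
  (forall n, U n.+1 `<=` U n) -> (forall n, V n.+1 `<=` V n) ->
  (forall n, V n `<=` U n) ->
  (forall n, (0 < mu (V n))%E) ->
  (mu \o U) @ \oo --> 0%E ->
  (fun n => fine (mu (U n `\` V n)) / fine (mu (U n))) @ \oo --> 0 ->
  forall k : nat,
    (fun n => `| fine (mu [set x | zeta mu f tau (U n) x = k%:R])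
               - fine (mu [set x | zeta mu f tau (V n) x = k%:R]) |) @ \oo --> 0.
Proof.
move=> mf mu_inv tau0 mU mV _ _ VU muV0 muU0 ratio0 k.
pose bound n := 2 * tau * (fine (mu (U n `\` V n)) / fine (mu (U n))) + fine (mu (U n)).
have bound0 : bound n @[n --> \oo] --> 0.
  have lim := cvgD (cvgMl_tmp (a := 2 * tau) ratio0) (fine_cvg muU0).
  by rewrite mulr0 addr0 in lim; exact: lim.
apply: (squeeze_cvgr (f := fun=> 0) (h := bound)) (cvg_cst 0) bound0.
apply: nearW => n; rewrite normr_ge0 /=.
by apply: zeta_level_dist_le => //; move: (muV0 n).
Qed.
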